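(* For every fixed integer $\Delta\ge 2$ there is a constant $\kappa=\kappa(\Delta)>0$ such that for arbitrarily large values of $|V|$ there exists a partition exchange economy with cycle bound $\Delta$ and only $n=3$ organizations whose $\lfloor\kappa|V|\rfloor$-supplemented core is empty. (That is, $\Omega(|V|)$ additional altruistic donors may be necessary.)
   Context: A partition exchange economy consists of organizations $N=\{1,\dots,n\}$; pairwise disjoint finite sets $V^1,\dots,V^n$, $V=\bigcup_iV^i$; patient sets $U^i\subseteq V^i$; a directed compatibility graph $\mathcal G=(V,E)$; and a cycle bound $\Delta$. An exchange among $W\subseteq V$ is a set of vertex-disjoint directed cycles of length at most $\Delta$ in $\mathcal G[W]$; $u_i(\mathcal E)$ is the number of vertices of $U^i$ lying on cycles of $\mathcal E$. Given a finite set $V^0$ of new vertices (additional altruistic donors, in no organization), $\mathcal G^{+V^0}$ adds these vertices, an arc from every other vertex into each $a\in V^0$, and for each $a\in V^0$ arcs from $a$ to an arbitrarily chosen set of vertices; exchanges in $\mathcal G^{+V^0}$ are sets of vertex-disjoint cycles of length $\le\Delta$ in it. A nonempty coalition $P\subseteq N$ blocks an exchange $\mathcal E$ if some exchange $\mathcal E'$ among $\bigcup_{i\in P}V^i$ (in $\mathcal G$) has $u_i(\mathcal E')>u_i(\mathcal E)$ for all $i\in P$. An exchange of $\mathcal G^{+V^0}$ blocked by no coalition is in the $V^0$-supplemented core. The $d$-supplemented core is nonempty if for some $V^0$ with $|V^0|\le d$ and some choice of its out-arcs the $V^0$-supplemented core is nonempty; otherwise it is empty. *)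

From mathcomp Require Import all_boot all_order all_algebra.

Import Order.TTheory GRing.Theory Num.Theory.

(* Vertices are 'I_nV; org v is the unique
   organization (in 'I_nOrg) whose vertex set V^i contains v, so the V^i are
   pairwise disjoint and cover V.  U^i = patients :&: V^i.  compat is the arc
   relation of the directed compatibility graph. *)
Record economy := Economy {
  nV : nat;
  nOrg : nat;
  org : 'I_nV -> 'I_nOrg;
  patients : {set 'I_nV};
  compat : rel 'I_nV }.
Arguments org : clear implicits.
Arguments patients : clear implicits.
Arguments compat : clear implicits.

Definition dcycle {T : eqType} (e : rel T) (D : nat) (c : seq T) : bool :=
  [&& 0 < size c, size c <= D, uniq c & cycle e c].

Definition exchange {T : eqType} (e : rel T) (D : nat) (W : pred T)
  (X : seq (seq T)) : bool :=
  [&& all (dcycle e D) X, uniq (flatten X) & all W (flatten X)].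

Definition isPatient (G : economy) (i : 'I_(nOrg G)) (v : 'I_(nV G)) : bool :=
  (v \in patients G) && (org G v == i).

Definition util (G : economy) (i : 'I_(nOrg G)) (X : seq (seq 'I_(nV G))) : nat :=
  count (isPatient G i) (flatten X).

(* The supplemented graph G^{+V^0} with V^0 = 'I_d (vertices inr a):
   original arcs, an arc from every other vertex into each new vertex a,
   and arcs from a to the chosen set out a of original vertices (arcs from a
   to other new vertices are present anyway). *)
Definition supp_rel (G : economy) (d : nat) (out : 'I_d -> {set 'I_(nV G)}) :
  rel ('I_(nV G) + 'I_d) :=
  fun x y =>
    match x, y with
    | inl u, inl v => compat G u v
    | inl _, inr _ => true
    | inr a, inr b => a != b
    | inr a, inl v => v \in out a
    end.

Definition supp_patient (G : economy) (d : nat) (i : 'I_(nOrg G)) :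
  pred ('I_(nV G) + 'I_d) :=
  fun x => if x is inl v then isPatient G i v else false.

Definition usupp (G : economy) (d : nat) (i : 'I_(nOrg G))
  (X : seq (seq ('I_(nV G) + 'I_d))) : nat :=
  count (supp_patient G d i) (flatten X).

Definition blocks (G : economy) (D : nat) (P : {set 'I_(nOrg G)})
  (ui : 'I_(nOrg G) -> nat) : Prop :=
  P != set0 /\
  exists X' : seq (seq 'I_(nV G)),
    exchange (compat G) D (fun v => org G v \in P) X' /\
    forall i, i \in P -> ui i < util G i X'.

Definition in_supp_core (G : economy) (D d : nat) (out : 'I_d -> {set 'I_(nV G)})
  (X : seq (seq ('I_(nV G) + 'I_d))) : Prop :=
  exchange (supp_rel G d out) D predT X /\
  forall P : {set 'I_(nOrg G)}, ~ blocks G D P (fun i => usupp G d i X).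

Definition supp_core_nonempty (G : economy) (D k : nat) : Prop :=
  exists (d : nat) (out : 'I_d -> {set 'I_(nV G)}),
    d <= k /\ exists X, in_supp_core G D d out X.

From mathcomp Require Import all_boot all_order all_algebra.
From mathcomp Require Import zify.
Import Order.TTheory GRing.Theory Num.Theory.
Set Implicit Arguments. Unset Strict Implicit. Unset Printing Implicit Defensive.

(* Take 4m disjoint undirected cycles of odd length L = 2 Delta + 1, all of
   whose vertices are patients, in four blocks of m.  In a cycle of block 0
   one vertex belongs to organization 0, a neighbour of it to 1 and the rest
   to 2; in block b = 1, 2, 3 one vertex belongs to b mod 3 and the rest to
   b - 1.  As L is odd and exceeds Delta, an exchange can cover a whole cycle
   only if one of its vertices is followed by an altruist, so with d
   altruists at most 8 Delta m + d patients are served.  On the other hand,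
   matching paths of each cycle into 2-cycles, every organization alone and
   every pair {i, i + 1}, trading z <= m patients of one block between them,
   can guarantee explicit utilities; a core exchange has to meet all these
   thresholds, which needs more than 8 Delta m + m / 4 patients.  Hence
   d > m / 4 = |V| / (16 L). *)

(** * Successors in an exchange *)

Lemma uniq_flatten_eq (T : eqType) (X : seq (seq T)) c1 c2 x :
  uniq (flatten X) -> c1 \in X -> c2 \in X -> x \in c1 -> x \in c2 -> c1 = c2.
Proof.
elim: X => [|c X IH] //=; rewrite cat_uniq => /and3P [_ dis U].
have inF c' : c' \in X -> x \in c' -> x \in flatten X by move=> ? ?; apply/flattenP; exists c'.
rewrite !inE => /orP [/eqP-> | h1] /orP [/eqP-> | h2] // x1 x2.
- by case/negP: dis; apply/hasP; exists x; [exact: inF h2 x2 |].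
- by case/negP: dis; apply/hasP; exists x; [exact: inF h1 x1 |].
- exact: IH.
Qed.

Section ExchangeSuccessor.
Variables (T : eqType) (e : rel T) (D : nat) (X : seq (seq T)).
Hypotheses (X_cycles : all (dcycle e D) X) (X_disjoint : uniq (flatten X)).

Definition cycle_of (x : T) : seq T := nth [::] X (find (fun c => x \in c) X).

Definition succ (x : T) : T := next (cycle_of x) x.

Lemma cycle_ofP x : x \in flatten X -> cycle_of x \in X /\ x \in cycle_of x.
Proof.
move=> /flattenP [c cX xc].
have hasx : has (fun c => x \in c) X by apply/hasP; exists c.
by split; [rewrite /cycle_of mem_nth // -has_find | exact: nth_find hasx].
Qed.

Lemma cycle_of_eq c x : c \in X -> x \in c -> cycle_of x = c.
Proof.
move=> cX xc; have [cxX xcx] : cycle_of x \in X /\ x \in cycle_of x.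
  by apply: cycle_ofP; apply/flattenP; exists c.
exact: uniq_flatten_eq X_disjoint cxX cX xcx xc.
Qed.

Lemma cycle_of_dcycle x : x \in flatten X -> dcycle e D (cycle_of x).
Proof. by move=> /cycle_ofP [cX _]; move/allP: X_cycles; apply. Qed.

Lemma succ_in_cycle x : x \in flatten X -> succ x \in cycle_of x.
Proof. by move=> /cycle_ofP [_ xc]; rewrite mem_next. Qed.

Lemma succ_edge x : x \in flatten X -> e x (succ x).
Proof.
move=> xF; have [_ xc] := cycle_ofP xF.
by case/and4P: (cycle_of_dcycle xF) => _ _ _ /next_cycle; apply.
Qed.

Lemma cycle_of_succ x : x \in flatten X -> cycle_of (succ x) = cycle_of x.
Proof. by move=> xF; have [cX _] := cycle_ofP xF; exact: cycle_of_eq cX (succ_in_cycle xF). Qed.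

Lemma prev_succ x : x \in flatten X -> prev (cycle_of (succ x)) (succ x) = x.
Proof.
move=> xF; rewrite cycle_of_succ //.
by case/and4P: (cycle_of_dcycle xF) => _ _ U _; exact: prev_next.
Qed.

Lemma succ_inj : {in flatten X &, injective succ}.
Proof. by move=> x y xF yF exy; rewrite -(prev_succ xF) -(prev_succ yF) exy. Qed.

End ExchangeSuccessor.

(** * The odd-cycle economy *)

Section OddCycles.
Variables (D m : nat).
Hypotheses (D_ge2 : 2 <= D) (m_gt0 : 0 < m).

Definition L := D.*2.+1.

Definition nx t := if t.+1 < L then t.+1 else 0.
Definition pv t := if t == 0 then L.-1 else t.-1.

Lemma nx_lt t : nx t < L.
Proof. by rewrite /nx; case: ifP. Qed.

Lemma pv_lt t : t < L -> pv t < L.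
Proof. by rewrite /pv /L; case: ifP; lia. Qed.

Lemma pv_nx t : t < L -> pv (nx t) = t.
Proof. by rewrite /pv /nx /L; case: ifP; case: ifP; lia. Qed.

Lemma nx_neq t : t < L -> nx t != t.
Proof. by rewrite /nx /L; case: ifP; lia. Qed.

Lemma nx2_neq t : t < L -> nx (nx t) != t.
Proof. by rewrite /nx /L; case: ifP; case: ifP; lia. Qed.

Lemma nxE t : t < L -> nx t = t.+1 %% L.
Proof.
rewrite /nx; case: (ltnP t.+1 L) => [lt _|le lt]; first by rewrite modn_small.
have -> : t.+1 = L by apply/eqP; rewrite eqn_leq le lt.
by rewrite modnn.
Qed.

Lemma iter_nx s i : s < L -> iter i nx s = (s + i) %% L.
Proof.
move=> sL; elim: i => [|i IH]; first by rewrite addn0 modn_small.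
by rewrite iterS IH nxE ?ltn_mod // -addn1 modnDml addn1 addnS.
Qed.

Lemma iter_pv_nx i t : t < L -> iter i pv (iter i nx t) = t.
Proof.
elim: i t => [|i IH] t tL //.
by rewrite iterS [iter i.+1 nx t]iterSr IH ?nx_lt // pv_nx.
Qed.

(* Since 2 (D + 1) = L + 1, two forward steps generate the cyclic group of order L. *)
Lemma nx2_transitive (P : nat -> Prop) :
  (forall t, t < L -> P t -> P (nx (nx t))) ->
  forall s t, s < L -> t < L -> P s -> P t.
Proof.
move=> step s t sL tL Ps.
have Pk k : P (iter k.*2 nx s).
  elim: k => [|k IH] //; rewrite doubleS !iterS; apply: step IH.
  by rewrite iter_nx // ltn_mod.
have := Pk ((t + L - s) * D.+1); rewrite iter_nx //.
have -> : s + ((t + L - s) * D.+1).*2 = (t + L - s).+1 * L + t.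
  have : s + (t + L - s) = t + L by lia.
  by move: (t + L - s) => x; rewrite /L; nia.
by rewrite modnMDl modn_small.
Qed.

Definition ncomp := 4 * m.
(* Written as a successor so that [inord] applies; it equals [ncomp * L] as m > 0. *)
Definition nvert := (ncomp * L).-1.+1.

Lemma nvertE : nvert = ncomp * L.
Proof. by rewrite /nvert prednK // muln_gt0 /ncomp muln_gt0 m_gt0. Qed.

Definition comp (v : nat) := v %/ L.
Definition pos (v : nat) := v %% L.
Definition vertex j t : 'I_nvert := inord (j * L + t).

Lemma vertexK j t : j < ncomp -> t < L -> vertex j t = j * L + t :> nat.
Proof.
move=> jn tL; rewrite /vertex inordK //; have := nvertE; rewrite /nvert => ->.
by apply: (@leq_trans (j * L + L)); rewrite ?ltn_add2l // -mulSnr leq_mul2r jn orbT.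
Qed.

Lemma comp_vertex j t : j < ncomp -> t < L -> comp (vertex j t) = j.
Proof. by move=> jn tL; rewrite vertexK // /comp divnMDl // divn_small // addn0. Qed.

Lemma pos_vertex j t : j < ncomp -> t < L -> pos (vertex j t) = t.
Proof. by move=> jn tL; rewrite vertexK // /pos modnMDl modn_small. Qed.

Lemma pos_lt v : pos v < L.
Proof. by rewrite ltn_mod. Qed.

Lemma comp_lt (v : 'I_nvert) : comp v < ncomp.
Proof. by rewrite ltn_divLR // -nvertE. Qed.

Lemma vertex_comp_pos (v : 'I_nvert) : vertex (comp v) (pos v) = v.
Proof. by apply: val_inj; rewrite /= vertexK ?comp_lt ?pos_lt // -divn_eq. Qed.

Lemma vertex_inj j t j' t' : j < ncomp -> t < L -> j' < ncomp -> t' < L ->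
  vertex j t = vertex j' t' -> j = j' /\ t = t'.
Proof.
move=> jn tL jn' tL' e.
by split; [rewrite -(comp_vertex jn tL) -(comp_vertex jn' tL') e
           | rewrite -(pos_vertex jn tL) -(pos_vertex jn' tL') e].
Qed.

Definition block j := if j < m then 0 else if j < m.*2 then 1 else if j < 3 * m then 2 else 3.
Definition owner_of b t := if b == 0 then minn t 2 else if t == 0 then b %% 3 else b.-1.

Lemma block_le j : block j <= 3.
Proof. by rewrite /block; case: (j < m); case: (j < m.*2); case: (j < 3 * m). Qed.

Lemma owner_of_le b t : b <= 3 -> owner_of b t <= 2.
Proof.
by move=> b3; rewrite /owner_of; case: eqP => _; [rewrite geq_minr | case: eqP; lia].
Qed.

Definition owner (v : 'I_nvert) : 'I_3 := inord (owner_of (block (comp v)) (pos v)).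

Lemma ownerE v : owner v = owner_of (block (comp v)) (pos v) :> nat.
Proof. by rewrite inordK // ltnS owner_of_le ?block_le. Qed.

Definition adjacent (v w : 'I_nvert) : bool :=
  (comp v == comp w) && ((pos w == nx (pos v)) || (pos v == nx (pos w))).

Definition odd_cycles := @Economy nvert 3 owner setT adjacent.

Lemma L_gt_D : D < L.
Proof. by rewrite /L; lia. Qed.

Definition comp_ord (v : 'I_nvert) : 'I_ncomp := Ordinal (comp_lt v).

(** * Covering a component needs an altruist *)

Section CoveredVertices.
Variables (d : nat) (out : 'I_d -> {set 'I_nvert}) (X : seq (seq ('I_nvert + 'I_d))).
Hypothesis X_exchange : exchange (supp_rel odd_cycles d out) D predT X.

Let X_cycles : all (dcycle (supp_rel odd_cycles d out) D) X.
Proof. by case/and3P: X_exchange. Qed.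
Let X_disjoint : uniq (flatten X).
Proof. by case/and3P: X_exchange. Qed.
Let F := flatten X.
Let sc := succ X.

Lemma succ_vertex j t : j < ncomp -> t < L -> inl (vertex j t) \in F ->
  (exists a, sc (inl (vertex j t)) = inr a) \/
  sc (inl (vertex j t)) = inl (vertex j (nx t)) \/ sc (inl (vertex j t)) = inl (vertex j (pv t)).
Proof.
move=> jn tL tF; have := succ_edge X_cycles tF; rewrite /sc.
case: (succ X _) => [w|a] /=; last by left; exists a.
rewrite /adjacent comp_vertex // pos_vertex // => /andP [/eqP jw ptw]; right.
rewrite -(vertex_comp_pos w) -jw.
by case/orP: ptw => /eqP ->; [left | right; rewrite pv_nx ?pos_lt].
Qed.

(* A successor map that sweeps the whole component from position 0 would
   put all L > D of its vertices on one cycle of the exchange. *)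
Lemma component_sweep_absurd j (st : nat -> nat) : j < ncomp ->
  (forall t, t < L -> st t < L) ->
  (forall t, t < L -> inl (vertex j t) \in F /\ sc (inl (vertex j t)) = inl (vertex j (st t))) ->
  (forall t, t < L -> exists i, t = iter i st 0) -> False.
Proof.
move=> jn st_lt st_succ reach.
have F0 : inl (vertex j 0) \in F by have [] := st_succ 0 isT.
set c := cycle_of X (inl (vertex j 0)); have [cX c0] := cycle_ofP F0.
have iter_in_c i : iter i st 0 < L /\ inl (vertex j (iter i st 0)) \in c.
  elim: i => [|i [iL ic]] //=; split; first exact: st_lt.
  have [iF isc] := st_succ _ iL.
  by rewrite -isc -[c](cycle_of_eq X_disjoint cX ic); exact: succ_in_cycle.
have : size [seq (inl (vertex j t) : 'I_nvert + 'I_d) | t <- iota 0 L] <= size c.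
  apply: uniq_leq_size.
    rewrite map_inj_in_uniq ?iota_uniq // => x y; rewrite !mem_iota => xL yL [].
    by case/(vertex_inj jn xL jn yL).
  move=> z /mapP [t]; rewrite mem_iota => tL ->.
  by have [i ->] := reach _ tL; exact: (iter_in_c i).2.
rewrite size_map size_iota; case/and4P: (cycle_of_dcycle X_cycles F0) => _ cD _ _.
by move/leq_trans/(_ cD); rewrite leqNgt L_gt_D.
Qed.

Lemma covered_component_altruist j : j < ncomp ->
  (forall t, t < L -> inl (vertex j t) \in F) ->
  exists2 t, t < L & exists a, sc (inl (vertex j t)) = inr a.
Proof.
move=> jn all_cov.
pose alt t := if sc (inl (vertex j t)) is inr _ then true else false.
have [/hasP [t]|/hasPn no_alt] := boolP (has alt (iota 0 L)).
  rewrite mem_iota /alt /= => tL; case e : (sc _) => [//|a] _.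
  by exists t => //; exists a.
exfalso.
have step t : t < L -> sc (inl (vertex j t)) = inl (vertex j (nx t)) \/
                       sc (inl (vertex j t)) = inl (vertex j (pv t)).
  move=> tL; case: (succ_vertex jn tL (all_cov _ tL)) => // [[a ea]].
  by move: (no_alt t); rewrite mem_iota /alt ea tL => /(_ isT).
have sc_inj t t' : t < L -> t' < L -> sc (inl (vertex j t)) = sc (inl (vertex j t')) -> t = t'.
  move=> tL tL' /(succ_inj X_cycles X_disjoint (all_cov _ tL) (all_cov _ tL')) [].
  by case/(vertex_inj jn tL jn tL').
pose fwd t := sc (inl (vertex j t)) == inl (vertex j (nx t)).
(* Two vertices two apart cannot both point to the vertex between them. *)
have fwd2 t : t < L -> fwd t -> fwd (nx (nx t)).
  move=> tL /eqP ft; case: (step _ (nx_lt (nx t))) => [/eqP //|bk].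
  have : nx (nx t) = t by apply: sc_inj; rewrite ?nx_lt // bk ft pv_nx ?nx_lt.
  by move/eqP; rewrite (negbTE (nx2_neq tL)).
have fwd_const s t : s < L -> t < L -> fwd s -> fwd t.
  exact: (nx2_transitive (P := fun t => fwd t)).
have [fwd0 | nfwd0] := boolP (fwd 0).
- apply: (@component_sweep_absurd j nx jn) => [t _|t tL|t tL]; first exact: nx_lt.
    by split; [exact: all_cov | apply/eqP; exact: (fwd_const 0 t isT tL fwd0)].
  by exists t; rewrite iter_nx // add0n modn_small.
- apply: (@component_sweep_absurd j pv jn) => [t tL|t tL|t tL]; first exact: pv_lt.
    split; first exact: all_cov.
    have nft : ~~ fwd t by apply: contra nfwd0; exact: (fwd_const t 0 tL isT).
    by case: (step _ tL) => // e; move: nft; rewrite /fwd e eqxx.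
  exists (L - t).
  have back : iter (L - t) nx t = 0 by rewrite iter_nx // subnKC ?modnn // ltnW.
  by rewrite -back iter_pv_nx.
Qed.

(* Every component not fully covered misses a vertex, and every fully covered
   one needs its own altruist, namely the successor of one of its vertices. *)
Lemma count_original_le : count is_inl F <= nvert - ncomp + d.
Proof.
pose Cov := [set v : 'I_nvert | inl v \in F].
have count_Cov : count is_inl F <= #|Cov|.
  pose left (x : 'I_nvert + 'I_d) := if x is inl v then Some v else None.
  have -> : count is_inl F = size (pmap left F) by rewrite size_pmap; apply: eq_count; case.
  have U : uniq (pmap left F) by apply: (pmap_uniq (g := inl)) => //; case.
  rewrite -(card_uniqP U); apply: subset_leq_card; apply/subsetP => v.
  by rewrite mem_pmap inE => /mapP [[w|a] wF] // [->].
pose Full := [set j : 'I_ncomp | [forall t : 'I_L, inl (vertex j t) \in F]].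
have ncomp_gt0 : 0 < ncomp by rewrite /ncomp; lia.
pose comp_of (x : 'I_nvert + 'I_d) : 'I_ncomp :=
  if x is inl v then comp_ord v else Ordinal ncomp_gt0.
have card_Full : #|Full| <= d.
  pose pred_comp a := comp_of (prev (cycle_of X (inr a)) (inr a)).
  rewrite -[d]card_ord; apply: leq_trans (leq_imset_card pred_comp _).
  apply: subset_leq_card; apply/subsetP => j; rewrite inE => /forallP jfull.
  have [t tL [a ea]] := covered_component_altruist (ltn_ord j) (fun t tL => jfull (Ordinal tL)).
  apply/imsetP; exists a => //; rewrite /pred_comp -ea.
  rewrite (prev_succ X_cycles X_disjoint (jfull (Ordinal tL))).
  by apply: val_inj; rewrite /= comp_vertex.
pose missed (j : 'I_ncomp) := vertex j (odflt ord0 [pick t : 'I_L | inl (vertex j t) \notin F]).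
have missed_notin j : j \notin Full -> missed j \notin Cov.
  rewrite inE negb_forall => /existsP [t0 t0F].
  by rewrite /missed inE; case: pickP => [t /= //|/(_ t0)]; rewrite t0F.
have missed_inj : injective missed.
  move=> j j' e; apply: val_inj.
  by have := congr1 (fun v : 'I_nvert => comp v) e; rewrite /= !comp_vertex.
have Cov_sub : Cov \subset ~: (missed @: ~: Full).
  apply/subsetP => v vC; rewrite inE; apply/imsetP => [[j]]; rewrite inE => jn ev.
  by move: (missed_notin _ jn); rewrite -ev vC.
have := subset_leq_card Cov_sub.
have := cardsC (missed @: ~: Full); rewrite card_imset // card_ord.
have := cardsC Full; rewrite card_ord.
have : ncomp <= nvert by rewrite nvertE leq_pmulr.
lia.
Qed.

End CoveredVertices.

(** * Exchanges of coalitions *)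

Lemma uniq_flatten_keyed (T : eqType) (key : T -> nat) (h : nat -> seq T) (s : seq nat) :
  uniq s -> (forall j, j \in s -> uniq (h j) /\ {in h j, forall x, key x = j}) ->
  uniq (flatten (map h s)).
Proof.
elim: s => [|j s IH] //= /andP [js Us] hs; rewrite cat_uniq.
have [Uj kj] := hs j (mem_head _ _).
rewrite Uj IH ?andbT //; last by move=> i iS; apply: hs; rewrite inE iS orbT.
apply/hasPn => x /flattenP [c /mapP [i iS ->] xc]; apply/negP => xj.
have iS' : i \in j :: s by rewrite inE iS orbT.
have [_ ki] := hs i iS'.
by move: js; rewrite -(kj x xj) (ki x xc) iS.
Qed.

Definition segment s k := traject nx s k.*2.

Lemma segment_lt s k t : s < L -> t \in segment s k -> t < L.
Proof. by move=> sL /trajectP [i _ ->]; rewrite iter_nx // ltn_mod. Qed.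

Lemma traject_nx_iota s n : s + n <= L -> traject nx s n = iota s n.
Proof.
elim: n s => [|n IH] s le //=; congr (_ :: _).
case: n IH le => [|n] IH le //.
by rewrite /nx ifT ?IH //; lia.
Qed.

Lemma segment_2_D : segment 2 D = rcons (iota 2 D.*2.-1) 0.
Proof.
rewrite /segment; set n := D.*2.-1; have -> : D.*2 = n.+1 by rewrite /n; lia.
rewrite trajectSr traject_nx_iota ?iter_nx; try by rewrite /n /L; lia.
have -> : 2 + n = L by rewrite /n /L; lia.
by rewrite modnn.
Qed.

Fixpoint pairs j s k : seq (seq 'I_nvert) :=
  if k is k'.+1 then [:: vertex j s; vertex j (nx s)] :: pairs j (nx (nx s)) k' else [::].

Lemma flatten_pairs j s k : flatten (pairs j s k) = map (vertex j) (segment s k).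
Proof. by elim: k s => [|k IH] s //=; rewrite IH. Qed.

Lemma pairs_mem j s k c : s < L -> c \in pairs j s k ->
  exists2 t, t < L & c = [:: vertex j t; vertex j (nx t)].
Proof.
elim: k s => [|k IH] s sL //=; rewrite inE => /orP [/eqP -> | ]; first by exists s.
by apply: IH; exact: nx_lt.
Qed.

(* Component j takes the 2 (p j).2 cyclically consecutive positions starting
   at (p j).1, matched into 2-cycles. *)
Definition plan_exchange (p : nat -> nat * nat) : seq (seq 'I_nvert) :=
  flatten [seq pairs j (p j).1 (p j).2 | j <- iota 0 ncomp].

Lemma flatten_plan_exchange p : flatten (plan_exchange p) =
  flatten [seq map (vertex j) (segment (p j).1 (p j).2) | j <- iota 0 ncomp].
Proof.
rewrite /plan_exchange; elim: (iota 0 ncomp) => //= j s IH.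
by rewrite flatten_cat IH flatten_pairs.
Qed.

Definition choice_ok (ks : seq nat) b (c : nat * nat) :=
  [&& c.1 < L, uniq (segment c.1 c.2) & all (fun t => owner_of b t \in ks) (segment c.1 c.2)].

Definition coalition (ks : seq nat) : {set 'I_3} := [set i : 'I_3 | (i : nat) \in ks].

Lemma plan_exchange_ok ks p : (forall j, j < ncomp -> choice_ok ks (block j) (p j)) ->
  exchange adjacent D (fun v => owner v \in coalition ks) (plan_exchange p).
Proof.
move=> ok; have okj j : j \in iota 0 ncomp -> choice_ok ks (block j) (p j).
  by rewrite mem_iota => /andP [_ jn]; exact: ok.
apply/and3P; split.
- apply/allP => c /flattenP [s /mapP [j jI ->]].
  case/and3P: (okj _ jI) => sL _ _; case/(pairs_mem sL) => t tL ->.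
  have jn : j < ncomp by move: jI; rewrite mem_iota.
  rewrite /dcycle /= D_ge2 /= andbT /adjacent !comp_vertex ?nx_lt // !pos_vertex ?nx_lt //.
  rewrite !eqxx orbT /= andbT inE; apply/eqP => /(vertex_inj jn tL jn (nx_lt t)) [_].
  by move/eqP; rewrite eq_sym (negbTE (nx_neq tL)).
- rewrite flatten_plan_exchange.
  apply: (uniq_flatten_keyed (key := fun v : 'I_nvert => comp v)) (iota_uniq _ _) _.
  move=> j jI; have jn : j < ncomp by move: jI; rewrite mem_iota.
  case/and3P: (okj _ jI) => sL U _; split.
    rewrite map_inj_in_uniq // => t t' tS t'S.
    by case/(vertex_inj jn (segment_lt sL tS) jn (segment_lt sL t'S)).
  by move=> v /mapP [t tS ->]; rewrite comp_vertex // (segment_lt sL tS).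
- rewrite flatten_plan_exchange; apply/allP => v /flattenP [s /mapP [j jI ->]].
  case/and3P: (okj _ jI) => sL _ /allP own /mapP [t tS ->].
  have jn : j < ncomp by move: jI; rewrite mem_iota.
  by rewrite inE ownerE comp_vertex ?pos_vertex ?(segment_lt sL tS) //; exact: own.
Qed.

Definition segment_util b (c : nat * nat) i := count (fun t => owner_of b t == i) (segment c.1 c.2).

Lemma util_plan_exchange p (i : 'I_3) : (forall j, j < ncomp -> (p j).1 < L) ->
  util odd_cycles i (plan_exchange p) = \sum_(0 <= j < ncomp) segment_util (block j) (p j) i.
Proof.
move=> pL; rewrite /util flatten_plan_exchange count_flatten -map_comp sumnE big_map.
rewrite /index_iota subn0; apply: eq_big_seq => j; rewrite mem_iota add0n => /= jn.
rewrite count_map; apply: eq_in_count => t tS /=.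
have tL := segment_lt (pL _ jn) tS.
by rewrite /isPatient /= inE -val_eqE /= ownerE comp_vertex ?pos_vertex.
Qed.

Definition plan (cs : seq (nat * nat)) bz z cz j : nat * nat :=
  if bz * m <= j < bz * m + z then cz else nth (0, 0) cs (block j).

Lemma block_range b j : b <= 3 -> b * m <= j < b * m + m -> block j = b.
Proof.
by rewrite /block; case: b => [|[|[|[|b]]]] // _ jr; do ?case: ifP => ?; lia.
Qed.

Lemma sum_blocks (h : nat -> nat) :
  \sum_(0 <= j < ncomp) h (block j) = m * (h 0 + h 1 + h 2 + h 3).
Proof.
have part b lo hi : b <= 3 -> lo = b * m -> hi = b * m + m ->
    \sum_(lo <= j < hi) h (block j) = m * h b.
  move=> b3 -> ->; rewrite (eq_big_nat _ _ (F2 := fun => h b)) ?sum_nat_const_nat ?addKn //.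
  by move=> j jr; rewrite (block_range b3).
rewrite (@big_cat_nat _ _ _ (3 * m) 0 ncomp) /=; [|by []|by rewrite /ncomp; lia].
rewrite (@big_cat_nat _ _ _ (2 * m) 0 (3 * m)) /=; [|by []|lia].
rewrite (@big_cat_nat _ _ _ m 0 (2 * m)) /=; [|by []|lia].
rewrite (part 0 0 m) ?(part 1 m (2 * m)) ?(part 2 (2 * m) (3 * m)) ?(part 3 (3 * m) ncomp);
  by rewrite ?mulnDr //; rewrite /ncomp; lia.
Qed.

Lemma sum_plan (g : nat -> nat * nat -> nat) cs bz z cz : bz <= 3 -> z <= m ->
  \sum_(0 <= j < ncomp) g (block j) (plan cs bz z cz j) + z * g bz (nth (0, 0) cs bz) =
  m * (\sum_(b < 4) g b (nth (0, 0) cs b)) + z * g bz cz.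
Proof.
move=> bz3 zm; set lo := bz * m; set hi := bz * m + z.
have three f : \sum_(0 <= j < ncomp) f j =
    \sum_(0 <= j < lo) f j + \sum_(lo <= j < hi) f j + \sum_(hi <= j < ncomp) f j.
  rewrite (@big_cat_nat _ _ _ hi 0 ncomp) /=; [|by []|by rewrite /hi /ncomp; nia].
  by rewrite (@big_cat_nat _ _ _ lo 0 hi) //= /hi leq_addr.
have in_range j : lo <= j < hi -> block j = bz.
  by move=> jr; apply: block_range; rewrite // -/lo; lia.
have on_range (f : nat -> nat) c : (forall j, lo <= j < hi -> f j = c) ->
    \sum_(lo <= j < hi) f j = z * c.
  by move=> fc; rewrite (eq_big_nat _ _ fc) sum_nat_const_nat /hi /lo addKn.
have off_range lo' hi' : (hi' <= lo) || (hi <= lo') ->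
    \sum_(lo' <= j < hi') g (block j) (plan cs bz z cz j) =
    \sum_(lo' <= j < hi') g (block j) (nth (0, 0) cs (block j)).
  move=> out; apply: eq_big_nat => j jr; rewrite /plan -/lo -/hi ifF //; lia.
rewrite big_ord_recr !big_ord_recr big_ord0 /= -(sum_blocks (fun b => g b (nth (0, 0) cs b))).
rewrite !three (off_range 0 lo) ?leqnn // (off_range hi ncomp) ?leqnn ?orbT //.
rewrite (on_range _ (g bz cz)) => [|j jr]; last by rewrite /plan -/lo -/hi jr in_range.
rewrite (on_range _ (g bz (nth (0, 0) cs bz))) => [|j jr]; last by rewrite in_range.
lia.
Qed.

Lemma plan_choice_ok ks cs bz z cz : bz <= 3 -> z <= m ->
  (forall b, b <= 3 -> choice_ok ks b (nth (0, 0) cs b)) -> choice_ok ks bz cz ->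
  forall j, j < ncomp -> choice_ok ks (block j) (plan cs bz z cz j).
Proof.
move=> bz3 zm ok_cs ok_cz j jn; rewrite /plan; case: ifP => [jr|_]; last exact/ok_cs/block_le.
by rewrite (block_range bz3) //; lia.
Qed.

Lemma unblocked_plan ks cs bz z cz (ui : 'I_3 -> nat) :
  bz <= 3 -> z <= m -> all (fun k => k <= 2) ks -> ks != [::] ->
  (forall b, b <= 3 -> choice_ok ks b (nth (0, 0) cs b)) -> choice_ok ks bz cz ->
  ~ blocks odd_cycles D (coalition ks) ui ->
  exists2 k, k \in ks &
    m * (\sum_(b < 4) segment_util b (nth (0, 0) cs b) k) + z * segment_util bz cz k
    <= ui (inord k) + z * segment_util bz (nth (0, 0) cs bz) k.
Proof.
move=> bz3 zm ks2 ks0 ok_cs ok_cz unblocked.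
pose goal k := m * (\sum_(b < 4) segment_util b (nth (0, 0) cs b) k) + z * segment_util bz cz k
                <= ui (inord k) + z * segment_util bz (nth (0, 0) cs bz) k.
have [/hasP [k kks gk]|/hasPn strict] := boolP (has goal ks).
  by exists k.
have ok := plan_choice_ok bz3 zm ok_cs ok_cz.
case: unblocked; split.
  case: ks ks2 ks0 {strict goal ok ok_cs ok_cz} => [//|k ks] /andP [k2 _] _.
  by apply/set0Pn; exists (inord k); rewrite inE inordK ?mem_head.
exists (plan_exchange (plan cs bz z cz)); split; first exact: plan_exchange_ok.
move=> i; rewrite inE => iks.
have := util_plan_exchange i (fun j jn => let: And3 sL _ _ := and3P (ok j jn) in sL).
move/(congr1 (addn^~ (z * segment_util bz (nth (0, 0) cs bz) i))).
rewrite /= (sum_plan (fun b c => segment_util b c i)) // => util_eq.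
rewrite -(ltn_add2r (z * segment_util bz (nth (0, 0) cs bz) i)) util_eq.
by have := strict _ iks; rewrite /goal -ltnNge inord_val.
Qed.

Lemma segment_0_1 : segment 0 1 = [:: 0; 1].
Proof. by rewrite /segment traject_nx_iota // /L; lia. Qed.

Lemma segment_0_D : segment 0 D = [:: 0, 1 & iota 2 D.*2.-2].
Proof.
rewrite /segment traject_nx_iota; last by rewrite /L; lia.
by have -> : D.*2 = D.*2.-2.+2 by lia.
Qed.

Lemma segment_1_D : segment 1 D = 1 :: iota 2 D.*2.-1.
Proof.
rewrite /segment traject_nx_iota; last by rewrite /L; lia.
by have -> : D.*2 = D.*2.-1.+1 by lia.
Qed.

Lemma segment_2_Dm1 : segment 2 D.-1 = iota 2 D.*2.-2.
Proof.
rewrite /segment traject_nx_iota; last by rewrite /L; lia.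
by have -> : (D.-1).*2 = D.*2.-2 by lia.
Qed.

Lemma owner_of_ge2 b t : 2 <= t -> owner_of b t = owner_of b 2.
Proof. by rewrite /owner_of; case: t => [|[|t]]. Qed.

Lemma count_owner_iota b i a n : 2 <= a ->
  count (fun t => owner_of b t == i) (iota a n) = (owner_of b 2 == i) * n.
Proof.
elim: n a => [|n IH] a a2 /=; first by rewrite muln0.
by rewrite IH ?owner_of_ge2 ?mulnS // leqW.
Qed.

Lemma all_owner_iota b (ks : seq nat) n :
  all (fun t => owner_of b t \in ks) (iota 2 n) = (n == 0) || (owner_of b 2 \in ks).
Proof.
case: n => [|n] //=; case own: (owner_of b 2 \in ks) => //=.
by apply/allP => t; rewrite mem_iota => /andP [t3 _]; rewrite owner_of_ge2 ?own // ltnW.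
Qed.

Ltac segments :=
  rewrite ?segment_0_1 ?segment_0_D ?segment_1_D ?segment_2_D ?segment_2_Dm1.

Ltac choice_check :=
  rewrite /choice_ok; cbn [nth fst snd]; segments;
  rewrite /= ?all_rcons ?rcons_uniq ?all_owner_iota ?inE ?mem_iota ?iota_uniq;
  rewrite /owner_of /= ?orbT ?andbT /L;
  first [done | lia].

Ltac plan_checks := case=> [|[|[|[|b]]]] // _; choice_check.

Ltac plan_value :=
  rewrite !big_ord_recr big_ord0 /segment_util;
  cbn [nth fst snd nat_of_ord widen_ord ord_max]; segments;
  rewrite /= -?cats1 ?count_cat ?count_owner_iota //= /owner_of /=; nia.

Lemma unblocked_0 ui : ~ blocks odd_cycles D (coalition [:: 0]) ui -> m * D.*2 <= ui (inord 0).
Proof.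
move/(@unblocked_plan [:: 0] [:: (0, 0); (1, D); (0, 0); (0, 0)] 0 0 (0, 0)).
by case=> //; [plan_checks | move=> k /[!inE] /eqP ->; plan_value].
Qed.

Lemma unblocked_1 ui : ~ blocks odd_cycles D (coalition [:: 1]) ui -> m * D.*2 <= ui (inord 1).
Proof.
move/(@unblocked_plan [:: 1] [:: (0, 0); (0, 0); (1, D); (0, 0)] 0 0 (0, 0)).
by case=> //; [plan_checks | move=> k /[!inE] /eqP ->; plan_value].
Qed.

Lemma unblocked_2 ui : ~ blocks odd_cycles D (coalition [:: 2]) ui ->
  (m * D.*2).*2 <= ui (inord 2) + m.*2.
Proof.
move/(@unblocked_plan [:: 2] [:: (2, D.-1); (0, 0); (0, 0); (1, D)] 0 0 (0, 0)).
by case=> //; [plan_checks | move=> k /[!inE] /eqP ->; plan_value].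
Qed.

Lemma unblocked_01 z ui : z <= m -> ~ blocks odd_cycles D (coalition [:: 0; 1]) ui ->
  m * D.*2 + m <= ui (inord 0) + z \/ m * D.*2 + m + z <= ui (inord 1).
Proof.
move=> zm /(@unblocked_plan [:: 0; 1] [:: (0, 1); (1, D); (1, D); (0, 0)] 1 z (0, D) ui isT zm).
case=> //; [plan_checks | choice_check |].
by move=> k /[!inE] /orP [] /eqP -> ineq; [left | right]; move: ineq; plan_value.
Qed.

Lemma unblocked_12 z ui : z <= m -> ~ blocks odd_cycles D (coalition [:: 1; 2]) ui ->
  m * D.*2 + m <= ui (inord 1) + z \/ (m * D.*2).*2 + z <= ui (inord 2) + m.
Proof.
move=> zm /(@unblocked_plan [:: 1; 2] [:: (1, D); (0, 0); (1, D); (1, D)] 2 z (0, D) ui isT zm).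
case=> //; [plan_checks | choice_check |].
by move=> k /[!inE] /orP [] /eqP -> ineq; [left | right]; move: ineq; plan_value.
Qed.

Lemma unblocked_20 z ui : z <= m -> ~ blocks odd_cycles D (coalition [:: 2; 0]) ui ->
  (m * D.*2).*2 <= ui (inord 2) + m + z \/ m * D.*2 + m + z <= ui (inord 0).
Proof.
move=> zm /(@unblocked_plan [:: 2; 0] [:: (2, D); (1, D); (0, 0); (1, D)] 3 z (0, D) ui isT zm).
case=> //; [plan_checks | choice_check |].
by move=> k /[!inE] /orP [] /eqP -> ineq; [left | right]; move: ineq; plan_value.
Qed.

(** * The core is empty *)

(* Use the pair blocking with z one more than the slack of the second organization. *)
Lemma threshold_split (n a b ui uj : nat) :
  (forall z, z <= n -> a <= ui + z \/ b + z <= uj) ->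
  a <= ui \/ a + b <= ui + uj + 1 \/ b + n <= uj.
Proof.
move=> split; case: (leqP (uj.+1 - b) n) => [/split [] | ]; lia.
Qed.

(* The core inequalities, with n = m, MD = 2 Delta m and u_i the utility of organization i. *)
Lemma core_bounds_absurd (n q d MD u0 u1 u2 : nat) : n = 4 * q -> 2 <= q -> d <= q -> 4 * n <= MD ->
  u0 + u1 + u2 <= 4 * MD + d -> MD <= u0 -> MD <= u1 -> MD.*2 <= u2 + n.*2 ->
  MD + n <= u0 \/ MD + n + (MD + n) <= u0 + u1 + 1 \/ MD + n + n <= u1 ->
  MD + n <= u1 \/ MD + n + MD.*2 <= u1 + (u2 + n) + 1 \/ MD.*2 + n <= u2 + n ->
  MD.*2 <= u2 + n \/ MD.*2 + (MD + n) <= u2 + n + u0 + 1 \/ MD + n + n <= u0 -> False.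
Proof. lia. Qed.

Lemma usupp_total d (X : seq (seq ('I_nvert + 'I_d))) :
  usupp odd_cycles d (inord 0) X + usupp odd_cycles d (inord 1) X + usupp odd_cycles d (inord 2) X
  = count is_inl (flatten X).
Proof.
rewrite /usupp; elim: (flatten X) => [|[v|a] s IH] //=; rewrite -IH //.
have own k : k <= 2 -> (owner v == inord k) = (owner v == k :> nat).
  by move=> k2; rewrite -val_eqE /= inordK.
rewrite /isPatient inE /= !own //; case: (owner v) => [[|[|[|k]]] k3] //=; lia.
Qed.

Lemma nvert_sub_ncomp : nvert - ncomp = 4 * (m * D.*2).
Proof. by rewrite nvertE /ncomp /L mulnSr addnK mulnA. Qed.

Lemma core_empty q : 2 <= q -> m = 4 * q -> ~ supp_core_nonempty odd_cycles D q.
Proof.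
move=> q2 mq [d [out [dq [X [X_exchange unblocked]]]]].
pose u k := usupp odd_cycles d (inord k) X.
apply: (@core_bounds_absurd m q d (m * D.*2) (u 0) (u 1) (u 2)) => //.
- by rewrite mulnC leq_mul2l (_ : 4 <= D.*2) ?orbT //; lia.
- rewrite /u usupp_total -nvert_sub_ncomp; exact: count_original_le X_exchange.
- exact: unblocked_0 (unblocked _).
- exact: unblocked_1 (unblocked _).
- exact: unblocked_2 (unblocked _).
- exact: threshold_split (fun z zm => unblocked_01 zm (unblocked _)).
- exact: threshold_split (fun z zm => unblocked_12 zm (unblocked _)).
- exact: threshold_split (fun z zm => unblocked_20 zm (unblocked _)).
Qed.

End OddCycles.

Lemma floor_invMn (c n : nat) : 0 < c -> absz (Num.floor ((c%:R)^-1 * (c * n)%:R : rat)%R) = n.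
Proof.
move=> c_gt0; rewrite natrM mulKf ?pnatr_eq0 -?lt0n //.
by rewrite -[(n%:R)%R]/((n%:Z)%:~R : rat)%R intrKfloor.
Qed.

Theorem mainTheorem4 :
  forall Delta : nat, (2 <= Delta)%N ->
  exists kappa : rat, (0 < kappa)%R /\
    forall M : nat, exists G : economy,
      [/\ nOrg G = 3, (M <= nV G)%N &
          ~ supp_core_nonempty G Delta
              (absz (Num.floor (kappa * (nV G)%:R)%R))].
Proof.
move=> Delta Delta_ge2; exists ((16 * L Delta)%:R^-1)%R; split.
  by rewrite invr_gt0 ltr0n muln_gt0.
move=> M; set q := M.+2; exists (odd_cycles Delta (4 * q)).
have m_gt0 : 0 < 4 * q by [].
have nV_eq : nV (odd_cycles Delta (4 * q)) = 16 * L Delta * q.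
  by rewrite /= (nvertE Delta m_gt0) /ncomp; nia.
split => //; first by rewrite nV_eq /q /L; nia.
by rewrite nV_eq floor_invMn //; exact: core_empty.
Qed.
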